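(* Let $\mathcal C$ be a semi-abelian arithmetical category and $X,Y\le A$ subobjects of an object $A$. Then $X$ and $Y$ Huq-commute if and only if $X\wedge Y=0$ and both $X$ and $Y$ are normal subobjects of the join $X\vee Y$.
   Context: Semi-abelian category: pointed, Barr-exact, protomodular, with binary coproducts. It is arithmetical if the lattice of equivalence relations on each object is distributive; for semi-abelian categories this is equivalent to the zero object being the only abelian object (object Huq-commuting with itself). Subobjects $X,Y\le A$ Huq-commute if there is $\varphi\colon X\times Y\to A$ with $\varphi\circ(1_X,0)$ and $\varphi\circ(0,1_Y)$ the inclusions. A normal subobject is a kernel; $\wedge,\vee$ are meet and join of subobjects of $A$. *)

Set Implicit Arguments.
Unset Strict Implicit.

Record Category := {
  ob :> Type;
  hom : ob -> ob -> Type;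
  idm : forall A, hom A A;
  comp : forall A B D, hom B D -> hom A B -> hom A D;
  comp_idl : forall A B (f : hom A B), comp (idm B) f = f;
  comp_idr : forall A B (f : hom A B), comp f (idm A) = f;
  comp_assoc : forall A B D E (f : hom A B) (g : hom B D) (h : hom D E),
      comp h (comp g f) = comp (comp h g) f }.

Arguments hom {c} _ _.
Arguments idm {c} _.
Arguments comp {c A B D} _ _.

Notation "g ∘ f" := (comp g f) (at level 40, left associativity).

Definition isIso {C : Category} {A B : C} (f : hom A B) : Prop :=
  exists g : hom B A, g ∘ f = idm A /\ f ∘ g = idm B.

Definition isMono {C : Category} {A B : C} (f : hom A B) : Prop :=
  forall W (u v : hom W A), f ∘ u = f ∘ v -> u = v.

Definition isInitial {C : Category} (Z : C) : Prop :=
  forall A : C, exists f : hom Z A, forall g : hom Z A, g = f.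

Definition isTerminal {C : Category} (Z : C) : Prop :=
  forall A : C, exists f : hom A Z, forall g : hom A Z, g = f.

Definition isZeroObj {C : Category} (Z : C) : Prop := isInitial Z /\ isTerminal Z.

Definition pointed (C : Category) : Prop := exists Z : C, isZeroObj Z.

Definition isZeroMor {C : Category} {A B : C} (f : hom A B) : Prop :=
  exists Z : C, isZeroObj Z /\ exists (g : hom A Z) (h : hom Z B), f = h ∘ g.

Definition isPullback {C : Category} {X Y Z P : C} (f : hom X Z) (g : hom Y Z)
    (p1 : hom P X) (p2 : hom P Y) : Prop :=
  f ∘ p1 = g ∘ p2 /\
  forall W (u : hom W X) (v : hom W Y), f ∘ u = g ∘ v ->
    exists w : hom W P, (p1 ∘ w = u /\ p2 ∘ w = v) /\
      forall w' : hom W P, p1 ∘ w' = u -> p2 ∘ w' = v -> w' = w.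

Definition has_pullbacks (C : Category) : Prop :=
  forall (X Y Z : C) (f : hom X Z) (g : hom Y Z),
    exists P (p1 : hom P X) (p2 : hom P Y), isPullback f g p1 p2.

Definition isProduct {C : Category} {X Y P : C} (p1 : hom P X) (p2 : hom P Y) : Prop :=
  forall W (u : hom W X) (v : hom W Y),
    exists w : hom W P, (p1 ∘ w = u /\ p2 ∘ w = v) /\
      forall w' : hom W P, p1 ∘ w' = u -> p2 ∘ w' = v -> w' = w.

Definition has_binary_products (C : Category) : Prop :=
  forall X Y : C, exists P (p1 : hom P X) (p2 : hom P Y), isProduct p1 p2.

Definition isCoproduct {C : Category} {X Y S : C} (i1 : hom X S) (i2 : hom Y S) : Prop :=
  forall W (u : hom X W) (v : hom Y W),
    exists w : hom S W, (w ∘ i1 = u /\ w ∘ i2 = v) /\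
      forall w' : hom S W, w' ∘ i1 = u -> w' ∘ i2 = v -> w' = w.

Definition has_binary_coproducts (C : Category) : Prop :=
  forall X Y : C, exists S (i1 : hom X S) (i2 : hom Y S), isCoproduct i1 i2.

Definition isCoequalizer {C : Category} {R X Q : C} (a b : hom R X) (q : hom X Q) : Prop :=
  q ∘ a = q ∘ b /\
  forall W (u : hom X W), u ∘ a = u ∘ b ->
    exists w : hom Q W, w ∘ q = u /\ forall w' : hom Q W, w' ∘ q = u -> w' = w.

Definition isRegularEpi {C : Category} {A B : C} (e : hom A B) : Prop :=
  exists R (a b : hom R A), isCoequalizer a b e.

Definition isKernelPair {C : Category} {A B P : C} (f : hom A B) (a b : hom P A) : Prop :=
  isPullback f f a b.

Definition isKernel {C : Category} {K B Q : C} (k : hom K B) (q : hom B Q) : Prop :=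
  isZeroMor (q ∘ k) /\
  forall W (w : hom W B), isZeroMor (q ∘ w) ->
    exists u : hom W K, k ∘ u = w /\ forall u' : hom W K, k ∘ u' = w -> u' = u.

Definition isEquivRel {C : Category} {R X : C} (r1 r2 : hom R X) : Prop :=
  (forall W (u v : hom W R), r1 ∘ u = r1 ∘ v -> r2 ∘ u = r2 ∘ v -> u = v) /\
  (exists d : hom X R, r1 ∘ d = idm X /\ r2 ∘ d = idm X) /\
  (exists s : hom R R, r1 ∘ s = r2 /\ r2 ∘ s = r1) /\
  (forall P (p1 p2 : hom P R), isPullback r2 r1 p1 p2 ->
     exists t : hom P R, r1 ∘ t = r1 ∘ p1 /\ r2 ∘ t = r2 ∘ p2).

Definition finitely_complete (C : Category) : Prop :=
  (exists T : C, isTerminal T) /\ has_pullbacks C.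

Definition regular (C : Category) : Prop :=
  finitely_complete C /\
  (forall (A B P : C) (f : hom A B) (a b : hom P A), isKernelPair f a b ->
     exists Q (q : hom A Q), isCoequalizer a b q) /\
  (forall (A B : C) (e : hom A B), isRegularEpi e ->
     forall D (f : hom D B) P (p1 : hom P D) (p2 : hom P A),
       isPullback f e p1 p2 -> isRegularEpi p1).

Definition barr_exact (C : Category) : Prop :=
  regular C /\
  forall (R X : C) (r1 r2 : hom R X), isEquivRel r1 r2 ->
    exists Q (f : hom X Q), isKernelPair f r1 r2.

(* Bourn: pulling back points along any f : E -> B reflects isomorphisms *)
Definition protomodular (C : Category) : Prop :=
  forall (B E : C) (f : hom E B) (A A' : C) (p : hom A B) (s : hom B A)
         (p' : hom A' B) (s' : hom B A') (h : hom A A'),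
    p ∘ s = idm B -> p' ∘ s' = idm B -> p' ∘ h = p -> h ∘ s = s' ->
    forall P (q : hom P E) (g : hom P A), isPullback f p q g ->
    forall P' (q' : hom P' E) (g' : hom P' A'), isPullback f p' q' g' ->
    forall k : hom P P', q' ∘ k = q -> g' ∘ k = h ∘ g -> isIso k -> isIso h.

Definition semi_abelian (C : Category) : Prop :=
  pointed C /\ barr_exact C /\ protomodular C /\ has_binary_coproducts C.

Record EqRel {C : Category} (X : C) := {
  er_ob : C;
  er1 : hom er_ob X;
  er2 : hom er_ob X;
  er_prop : isEquivRel er1 er2 }.

Definition relLe {C : Category} {X : C} (R S : EqRel X) : Prop :=
  exists k : hom (er_ob R) (er_ob S), er1 S ∘ k = er1 R /\ er2 S ∘ k = er2 R.

Definition isMeetRel {C : Category} {X : C} (R S M : EqRel X) : Prop :=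
  relLe M R /\ relLe M S /\ forall T : EqRel X, relLe T R -> relLe T S -> relLe T M.

Definition isJoinRel {C : Category} {X : C} (R S J : EqRel X) : Prop :=
  relLe R J /\ relLe S J /\ forall T : EqRel X, relLe R T -> relLe S T -> relLe J T.

(* distributivity: R /\ (S \/ T) = (R /\ S) \/ (R /\ T) in Eq(X) *)
Definition arithmetical (C : Category) : Prop :=
  forall (X : C) (R S T SjT RmSjT RmS RmT N : EqRel X),
    isJoinRel S T SjT -> isMeetRel R SjT RmSjT ->
    isMeetRel R S RmS -> isMeetRel R T RmT -> isJoinRel RmS RmT N ->
    relLe RmSjT N /\ relLe N RmSjT.

Definition subLe {C : Category} {X Y A : C} (m : hom X A) (n : hom Y A) : Prop :=
  exists k : hom X Y, n ∘ k = m.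

Definition isJoinSub {C : Category} {X Y J A : C} (mX : hom X A) (mY : hom Y A)
    (j : hom J A) : Prop :=
  isMono j /\ subLe mX j /\ subLe mY j /\
  forall B (n : hom B A), isMono n -> subLe mX n -> subLe mY n -> subLe j n.

Definition meetIsZero {C : Category} {X Y A : C} (mX : hom X A) (mY : hom Y A) : Prop :=
  forall P (p1 : hom P X) (p2 : hom P Y), isPullback mX mY p1 p2 -> isZeroObj P.

Definition isNormalSub {C : Category} {X B : C} (m : hom X B) : Prop :=
  exists Q (q : hom B Q), isKernel m q.

Definition huqCommute {C : Category} {X Y A : C} (mX : hom X A) (mY : hom Y A) : Prop :=
  exists P (p1 : hom P X) (p2 : hom P Y), isProduct p1 p2 /\
  exists phi : hom P A,
    (forall u : hom X P, p1 ∘ u = idm X -> isZeroMor (p2 ∘ u) -> phi ∘ u = mX) /\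
    (forall v : hom Y P, isZeroMor (p1 ∘ v) -> p2 ∘ v = idm Y -> phi ∘ v = mY).

From Stdlib Require Import IndefiniteDescription.

(* In a pointed protomodular category the kernel and a section of a split
   epimorphism are jointly strongly epic; for a product X × Y this means that a
   map out of X × Y factors through a monomorphism as soon as its restrictions
   to X and to Y do.

   If X and Y are the kernels of q_X and q_Y on X ∨ Y and X ∧ Y = 0, then the
   pairing (q_X, q_Y) : X ∨ Y → Q_X × Q_Y has trivial kernel, hence is monic,
   and (x, y) ↦ (q_X y, q_Y x) agrees with it on X and on Y; factoring through
   it gives the cooperator X × Y → X ∨ Y.

   Conversely, arithmeticity makes the cooperator φ monic: φ is monic on
   Y = Ker π_X and on X = Ker π_Y, so Eq(φ) ∧ Eq(π_X) = Δ = Eq(φ) ∧ Eq(π_Y),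
   while Eq(π_X) ∨ Eq(π_Y) = ∇, and distributivity gives Eq(φ) = Δ.  Hence
   X × Y ≅ X ∨ Y, in which X and Y are the kernels of the projections and meet
   in 0. *)

Ltac assoc_l := repeat rewrite comp_assoc.
Ltac assoc_r := repeat rewrite <- comp_assoc.

Definition jointlyMono {C : Category} {P X Y : C} (f : hom P X) (g : hom P Y) : Prop :=
  forall W (a b : hom W P), f ∘ a = f ∘ b -> g ∘ a = g ∘ b -> a = b.

Section Limits.
Context {C : Category}.

Lemma product_jointlyMono {X Y P : C} {p1 : hom P X} {p2 : hom P Y} :
  isProduct p1 p2 -> jointlyMono p1 p2.
Proof.
  intros Hp W a b E1 E2. destruct (Hp W (p1 ∘ b) (p2 ∘ b)) as (w & _ & Hw).
  rewrite (Hw a E1 E2), (Hw b eq_refl eq_refl). reflexivity.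
Qed.

Lemma pullback_jointlyMono {X Y B P : C} {f : hom X B} {g : hom Y B}
  {p1 : hom P X} {p2 : hom P Y} :
  isPullback f g p1 p2 -> jointlyMono p1 p2.
Proof.
  intros [Hc Hp] W a b E1 E2. destruct (Hp W (p1 ∘ b) (p2 ∘ b)) as (w & _ & Hw).
  { assoc_l. rewrite Hc. reflexivity. }
  rewrite (Hw a E1 E2), (Hw b eq_refl eq_refl). reflexivity.
Qed.

Lemma product_swap {X Y P : C} {p1 : hom P X} {p2 : hom P Y} :
  isProduct p1 p2 -> isProduct p2 p1.
Proof.
  intros Hp W u v. destruct (Hp W v u) as (w & [W1 W2] & Hw).
  exists w. split; [split; assumption|]. intros w' E1 E2. exact (Hw w' E2 E1).
Qed.

Lemma pullback_mono {X Y B P : C} {f : hom X B} {g : hom Y B}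
  {p1 : hom P X} {p2 : hom P Y} :
  isPullback f g p1 p2 -> isMono g -> isMono p1.
Proof.
  intros Hp Hg W u v E. apply (pullback_jointlyMono Hp); [exact E|].
  apply Hg. assoc_l. rewrite <- (proj1 Hp). assoc_r. rewrite E. reflexivity.
Qed.

Lemma section_mono {A B : C} (r : hom A B) (s : hom B A) : r ∘ s = idm B -> isMono s.
Proof.
  intros E W u v Euv. rewrite <- (comp_idl u), <- (comp_idl v), <- E.
  assoc_r. rewrite Euv. reflexivity.
Qed.

Lemma kernel_restrict {A Q K N : C} (p : hom A Q) (k : hom K A) (n : hom N A) (a : hom K N) :
  isKernel k p -> isMono n -> n ∘ a = k -> isKernel a (p ∘ n).
Proof.
  intros [Hz Hk] Hn Ea. split.
  - rewrite <- comp_assoc, Ea. exact Hz.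
  - intros W w Hw. rewrite <- comp_assoc in Hw.
    destruct (Hk W (n ∘ w) Hw) as (u & Hu & Uu). exists u. split.
    + apply Hn. rewrite comp_assoc, Ea. exact Hu.
    + intros u' Hu'. apply Uu. rewrite <- Ea, <- comp_assoc, Hu'. reflexivity.
Qed.

Lemma kernel_iso {B B' Q K : C} (k : hom K B) (q : hom B Q) (h : hom B B') (g : hom B' B) :
  isKernel k q -> h ∘ g = idm B' -> g ∘ h = idm B -> isKernel (h ∘ k) (q ∘ g).
Proof.
  intros [Hz Hk] Ehg Egh. split.
  - assert (E : q ∘ g ∘ (h ∘ k) = q ∘ k).
    { assoc_r. rewrite (comp_assoc k h g), Egh, comp_idl. reflexivity. }
    rewrite E. exact Hz.
  - intros W w Hw. rewrite <- comp_assoc in Hw.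
    destruct (Hk W (g ∘ w) Hw) as (u & Hu & Uu). exists u. split.
    + rewrite <- comp_assoc, Hu, comp_assoc, Ehg. apply comp_idl.
    + intros u' Hu'. apply Uu. rewrite <- Hu'. assoc_l. rewrite Egh, comp_idl. reflexivity.
Qed.

Lemma join_swap {X Y J A : C} {mX : hom X A} {mY : hom Y A} {j : hom J A} :
  isJoinSub mX mY j -> isJoinSub mY mX j.
Proof.
  intros (Hj & HX & HY & Hleast). split; [exact Hj|split; [exact HY|split; [exact HX|]]].
  intros B n Hn HnX HnY. exact (Hleast B n Hn HnY HnX).
Qed.

Lemma kernelPair_isEquivRel {X B R : C} (f : hom X B) (r1 r2 : hom R X) :
  isPullback f f r1 r2 -> isEquivRel r1 r2.
Proof.
  intros Hp. pose proof (proj1 Hp) as Hc. split; [|split; [|split]].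
  - exact (pullback_jointlyMono Hp).
  - destruct (proj2 Hp X (idm X) (idm X) eq_refl) as (d & [D1 D2] & _). exists d. auto.
  - destruct (proj2 Hp R r2 r1 (eq_sym Hc)) as (s & [S1 S2] & _). exists s. auto.
  - intros P p1 p2 Hq. destruct (proj2 Hp P (r1 ∘ p1) (r2 ∘ p2)) as (t & [T1 T2] & _).
    + assoc_l. rewrite Hc. assoc_r. rewrite (proj1 Hq). assoc_l. rewrite Hc. reflexivity.
    + exists t. auto.
Qed.

Definition kernelPairRel {X B R : C} {f : hom X B} {r1 r2 : hom R X}
  (H : isPullback f f r1 r2) : EqRel X :=
  {| er_ob := R; er1 := r1; er2 := r2; er_prop := kernelPair_isEquivRel f r1 r2 H |}.

Lemma diagonal_isEquivRel (X : C) : isEquivRel (idm X) (idm X).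
Proof.
  split; [|split; [|split]].
  - intros W u v E1 _. rewrite !comp_idl in E1. exact E1.
  - exists (idm X). split; apply comp_idl.
  - exists (idm X). split; apply comp_idl.
  - intros P p1 p2 Hq. exists p1. split; [reflexivity|].
    pose proof (proj1 Hq) as E. rewrite !comp_idl in *. exact E.
Qed.

Definition diagonalRel (X : C) : EqRel X :=
  {| er_ob := X; er1 := idm X; er2 := idm X; er_prop := diagonal_isEquivRel X |}.

Lemma diagonalRel_le {X : C} (U : EqRel X) : relLe (diagonalRel X) U.
Proof. destruct (er_prop U) as (_ & (d & D1 & D2) & _). exists d. simpl. auto. Qed.

Lemma join_diagonalRel (X : C) : isJoinRel (diagonalRel X) (diagonalRel X) (diagonalRel X).
Proof.
  split; [apply diagonalRel_le|split; [apply diagonalRel_le|]].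
  intros U _ _. apply diagonalRel_le.
Qed.

Lemma meet_kernelPairRel_diagonal {X A B RA RB : C} {f : hom X A} {g : hom X B}
  {r1 r2 : hom RA X} {s1 s2 : hom RB X} (Hf : isPullback f f r1 r2) (Hg : isPullback g g s1 s2) :
  jointlyMono f g -> isMeetRel (kernelPairRel Hf) (kernelPairRel Hg) (diagonalRel X).
Proof.
  intros Hfg. split; [apply diagonalRel_le|split; [apply diagonalRel_le|]].
  intros U (k1 & K1 & K2) (k2 & L1 & L2). simpl in *.
  assert (E : er1 U = er2 U).
  { apply Hfg.
    - rewrite <- K1, <- K2. assoc_l. rewrite (proj1 Hf). reflexivity.
    - rewrite <- L1, <- L2. assoc_l. rewrite (proj1 Hg). reflexivity. }
  exists (er1 U). simpl. rewrite !comp_idl. auto.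
Qed.

End Limits.

Section Pointed.
Context {C : Category} {Z : C} (HZ : isZeroObj Z).

Definition from_zero (B : C) : hom Z B :=
  proj1_sig (constructive_indefinite_description _ (proj1 HZ B)).
Definition to_zero (A : C) : hom A Z :=
  proj1_sig (constructive_indefinite_description _ (proj2 HZ A)).
Definition zero_mor (A B : C) : hom A B := from_zero B ∘ to_zero A.

Lemma from_zero_unique {B : C} (g : hom Z B) : g = from_zero B.
Proof.
  unfold from_zero. destruct (constructive_indefinite_description _ _) as [f Hf]. exact (Hf g).
Qed.

Lemma to_zero_unique {A : C} (g : hom A Z) : g = to_zero A.
Proof.
  unfold to_zero. destruct (constructive_indefinite_description _ _) as [f Hf]. exact (Hf g).
Qed.

Lemma zero_mor_from_zero {B : C} (g : hom Z B) : g = zero_mor Z B.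
Proof. rewrite (from_zero_unique g), (from_zero_unique (zero_mor Z B)). reflexivity. Qed.

Lemma comp_zero {A B D : C} (f : hom B D) : f ∘ zero_mor A B = zero_mor A D.
Proof.
  unfold zero_mor. rewrite comp_assoc, (from_zero_unique (f ∘ from_zero B)). reflexivity.
Qed.

Lemma zero_comp {A B D : C} (f : hom A B) : zero_mor B D ∘ f = zero_mor A D.
Proof.
  unfold zero_mor. rewrite <- comp_assoc, (to_zero_unique (to_zero B ∘ f)). reflexivity.
Qed.

Lemma isZeroMor_iff {A B : C} (f : hom A B) : isZeroMor f <-> f = zero_mor A B.
Proof.
  split.
  - intros (Z' & HZ' & g & h & ->). destruct (proj2 HZ' A) as [t Ht].
    rewrite (Ht g), <- (Ht (from_zero Z' ∘ to_zero A)), comp_assoc.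
    unfold zero_mor. rewrite (from_zero_unique (h ∘ from_zero Z')). reflexivity.
  - intros ->. exists Z. split; [exact HZ|]. exists (to_zero A), (from_zero B). reflexivity.
Qed.

Lemma isZeroObj_iff (P : C) : isZeroObj P <-> idm P = zero_mor P P.
Proof.
  split.
  - intros [HI _]. destruct (HI P) as [f Hf].
    rewrite (Hf (idm P)), (Hf (zero_mor P P)). reflexivity.
  - intros E. split.
    + intros B. exists (zero_mor P B). intros g. rewrite <- (comp_idr g), E. apply comp_zero.
    + intros B. exists (zero_mor B P). intros g. rewrite <- (comp_idl g), E. apply zero_comp.
Qed.

Lemma kernel_pullback {A Y K : C} (p : hom A Y) (k : hom K A) :
  isKernel k p -> isPullback (from_zero Y) p (to_zero K) k.
Proof.
  intros [Hz Hk]. apply isZeroMor_iff in Hz. split.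
  - rewrite Hz. reflexivity.
  - intros W u v E.
    assert (Hv : isZeroMor (p ∘ v)).
    { apply isZeroMor_iff. rewrite <- E, (to_zero_unique u). reflexivity. }
    destruct (Hk W v Hv) as (w & Hw & Uw). exists w. split; [split|].
    + rewrite (to_zero_unique u). apply to_zero_unique.
    + exact Hw.
    + intros w' _ Hw'. exact (Uw w' Hw').
Qed.

Definition isProductInjections {X Y P : C} (p1 : hom P X) (p2 : hom P Y)
  (i1 : hom X P) (i2 : hom Y P) : Prop :=
  p1 ∘ i1 = idm X /\ p2 ∘ i1 = zero_mor X Y /\ p1 ∘ i2 = zero_mor Y X /\ p2 ∘ i2 = idm Y.

Lemma product_injections_exist {X Y P : C} {p1 : hom P X} {p2 : hom P Y} :
  isProduct p1 p2 -> exists i1 i2, isProductInjections p1 p2 i1 i2.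
Proof.
  intros Hp. destruct (Hp X (idm X) (zero_mor X Y)) as (i1 & [E11 E12] & _).
  destruct (Hp Y (zero_mor Y X) (idm Y)) as (i2 & [E21 E22] & _).
  exists i1, i2. repeat split; assumption.
Qed.

Lemma product_injections_swap {X Y P : C} {p1 : hom P X} {p2 : hom P Y}
  {i1 : hom X P} {i2 : hom Y P} :
  isProductInjections p1 p2 i1 i2 -> isProductInjections p2 p1 i2 i1.
Proof. intros (E11 & E12 & E21 & E22). repeat split; assumption. Qed.

Lemma kernel_product_injection {X Y P : C} {p1 : hom P X} {p2 : hom P Y}
  {i1 : hom X P} {i2 : hom Y P} :
  isProduct p1 p2 -> isProductInjections p1 p2 i1 i2 -> isKernel i1 p2.
Proof.
  intros Hp (E11 & E12 & _). split.
  - apply isZeroMor_iff. exact E12.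
  - intros W w Hw. apply isZeroMor_iff in Hw.
    exists (p1 ∘ w). split.
    + apply (product_jointlyMono Hp); assoc_l.
      * rewrite E11, comp_idl. reflexivity.
      * rewrite E12, !zero_comp. symmetry. exact Hw.
    + intros u Hu. rewrite <- Hu. assoc_l. rewrite E11, comp_idl. reflexivity.
Qed.

Lemma huqCommute_iff {X Y A : C} (mX : hom X A) (mY : hom Y A) :
  huqCommute mX mY <->
  exists P (p1 : hom P X) (p2 : hom P Y) (i1 : hom X P) (i2 : hom Y P) (phi : hom P A),
    isProduct p1 p2 /\ isProductInjections p1 p2 i1 i2 /\ phi ∘ i1 = mX /\ phi ∘ i2 = mY.
Proof.
  split.
  - intros (P & p1 & p2 & Hp & phi & H1 & H2).
    destruct (product_injections_exist Hp) as (i1 & i2 & Hinj).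
    pose proof Hinj as (E11 & E12 & E21 & E22).
    exists P, p1, p2, i1, i2, phi. split; [exact Hp|split; [exact Hinj|split]].
    + apply H1; [exact E11|]. apply isZeroMor_iff. exact E12.
    + apply H2; [|exact E22]. apply isZeroMor_iff. exact E21.
  - intros (P & p1 & p2 & i1 & i2 & phi & Hp & (E11 & E12 & E21 & E22) & F1 & F2).
    exists P, p1, p2. split; [exact Hp|]. exists phi. split.
    + intros u U1 U2. apply isZeroMor_iff in U2.
      replace u with i1; [exact F1|]. apply (product_jointlyMono Hp); congruence.
    + intros v V1 V2. apply isZeroMor_iff in V1.
      replace v with i2; [exact F2|]. apply (product_jointlyMono Hp); congruence.
Qed.

Lemma relLe_totalRel {X N : C} {n1 n2 : hom N X}
  (H : isPullback (to_zero X) (to_zero X) n1 n2) (U : EqRel X) : relLe U (kernelPairRel H).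
Proof.
  destruct (proj2 H _ (er1 U) (er2 U)) as (k & [K1 K2] & _).
  { rewrite (to_zero_unique (to_zero X ∘ er1 U)). symmetry. apply to_zero_unique. }
  exists k. simpl. auto.
Qed.

Lemma meet_totalRel {X N : C} {n1 n2 : hom N X}
  (H : isPullback (to_zero X) (to_zero X) n1 n2) (R : EqRel X) :
  isMeetRel R (kernelPairRel H) R.
Proof.
  split; [|split; [apply relLe_totalRel|]].
  - exists (idm _). split; apply comp_idr.
  - intros U HU _. exact HU.
Qed.

Lemma meet_zero_of_mono_copair {X Y P A : C} {p1 : hom P X} {p2 : hom P Y}
  {i1 : hom X P} {i2 : hom Y P} {mX : hom X A} {mY : hom Y A} (phi : hom P A) :
  isProductInjections p1 p2 i1 i2 -> isMono phi -> phi ∘ i1 = mX -> phi ∘ i2 = mY ->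
  meetIsZero mX mY.
Proof.
  intros (E11 & E12 & E21 & E22) Hphi F1 F2 M q1 q2 Hq. apply isZeroObj_iff.
  assert (E : i1 ∘ q1 = i2 ∘ q2).
  { apply Hphi. assoc_l. rewrite F1, F2. exact (proj1 Hq). }
  apply (pullback_jointlyMono Hq); rewrite comp_zero, comp_idr.
  - rewrite <- (comp_idl q1), <- E11, <- comp_assoc, E, comp_assoc, E21. apply zero_comp.
  - rewrite <- (comp_idl q2), <- E22, <- comp_assoc, <- E, comp_assoc, E12. apply zero_comp.
Qed.

Hypothesis Hpb : has_pullbacks C.

Lemma product_exists (X Y : C) : exists P (p1 : hom P X) (p2 : hom P Y), isProduct p1 p2.
Proof.
  destruct (Hpb X Y Z (to_zero X) (to_zero Y)) as (P & p1 & p2 & _ & Hp).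
  exists P, p1, p2. intros W u v. apply Hp.
  rewrite (to_zero_unique (to_zero X ∘ u)), (to_zero_unique (to_zero Y ∘ v)). reflexivity.
Qed.

Lemma join_kernelPairRel_projections {X Y P S T N : C} {p1 : hom P X} {p2 : hom P Y}
  {s1 s2 : hom S P} {t1 t2 : hom T P} {n1 n2 : hom N P}
  (Hs : isPullback p1 p1 s1 s2) (Ht : isPullback p2 p2 t1 t2)
  (Hn : isPullback (to_zero P) (to_zero P) n1 n2) :
  isProduct p1 p2 -> isJoinRel (kernelPairRel Hs) (kernelPairRel Ht) (kernelPairRel Hn).
Proof.
  intros Hp. split; [apply relLe_totalRel|split; [apply relLe_totalRel|]].
  intros U (kS & KS1 & KS2) (kT & KT1 & KT2). simpl in *.
  (* n1 is linked to w := (p1 n1, p2 n2) by Eq(p1), and w to n2 by Eq(p2) *)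
  destruct (Hp N (p1 ∘ n1) (p2 ∘ n2)) as (w & [W1 W2] & _).
  destruct (proj2 Hs N n1 w (eq_sym W1)) as (a & [A1 A2] & _).
  destruct (proj2 Ht N w n2 W2) as (b & [B1 B2] & _).
  destruct (Hpb _ _ _ (er2 U) (er1 U)) as (Q & q1 & q2 & Hq).
  destruct (proj2 Hq N (kS ∘ a) (kT ∘ b)) as (m & [M1 M2] & _).
  { assoc_l. rewrite KS2, KT1, A2, B1. reflexivity. }
  destruct (er_prop U) as (_ & _ & _ & Htrans).
  destruct (Htrans Q q1 q2 Hq) as (t & T1 & T2).
  exists (t ∘ m). simpl. split.
  - assoc_l. rewrite T1. assoc_r. rewrite M1. assoc_l. rewrite KS1. exact A1.
  - assoc_l. rewrite T2. assoc_r. rewrite M2. assoc_l. rewrite KT2. exact B2.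
Qed.

Lemma meet_zero_cone {X Y A W : C} {mX : hom X A} {mY : hom Y A} (a : hom W X) (b : hom W Y) :
  meetIsZero mX mY -> mX ∘ a = mY ∘ b -> a = zero_mor W X.
Proof.
  intros Hmeet E. destruct (Hpb _ _ _ mX mY) as (M & m1 & m2 & HM).
  destruct (proj2 HM W a b E) as (c & [C1 _] & _).
  rewrite <- C1, <- (comp_idl c), (proj1 (isZeroObj_iff M) (Hmeet M m1 m2 HM)).
  rewrite zero_comp, comp_zero. reflexivity.
Qed.

Hypothesis Harith : arithmetical C.

Lemma mono_of_jointlyMono_projections {X Y P A : C} {p1 : hom P X} {p2 : hom P Y}
  (phi : hom P A) :
  isProduct p1 p2 -> jointlyMono phi p1 -> jointlyMono phi p2 -> isMono phi.
Proof.
  intros Hp J1 J2.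
  destruct (Hpb _ _ _ phi phi) as (R & r1 & r2 & HR).
  destruct (Hpb _ _ _ p1 p1) as (S & s1 & s2 & HS).
  destruct (Hpb _ _ _ p2 p2) as (T & t1 & t2 & HT).
  destruct (Hpb _ _ _ (to_zero P) (to_zero P)) as (N & n1 & n2 & HN).
  destruct (Harith P (kernelPairRel HR) (kernelPairRel HS) (kernelPairRel HT) (kernelPairRel HN)
              (kernelPairRel HR) (diagonalRel P) (diagonalRel P) (diagonalRel P)
              (join_kernelPairRel_projections HS HT HN Hp) (meet_totalRel HN _)
              (meet_kernelPairRel_diagonal HR HS J1) (meet_kernelPairRel_diagonal HR HT J2)
              (join_diagonalRel P)) as [(k & K1 & K2) _].
  simpl in K1, K2. rewrite comp_idl in K1, K2.
  intros W u v E. destruct (proj2 HR W u v E) as (w & [W1 W2] & _).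
  rewrite <- W1, <- W2, <- K1, <- K2. reflexivity.
Qed.

Section Protomodular.
Hypothesis Hpm : protomodular C.

Lemma kernel_section_mono_iso {A Y K N : C} (p : hom A Y) (s : hom Y A) (k : hom K A)
  (n : hom N A) (a : hom K N) (b : hom Y N) :
  p ∘ s = idm Y -> isKernel k p -> isMono n -> n ∘ a = k -> n ∘ b = s -> isIso n.
Proof.
  intros Eps Hk Hn Ea Eb.
  assert (Hb : p ∘ n ∘ b = idm Y) by (rewrite <- comp_assoc, Eb; exact Eps).
  apply (Hpm Y Z (from_zero Y) N A (p ∘ n) b p s n Hb Eps eq_refl Eb
           K (to_zero K) a (kernel_pullback _ _ (kernel_restrict p k n a Hk Hn Ea))
           K (to_zero K) k (kernel_pullback _ _ Hk) (idm K)).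
  - apply comp_idr.
  - rewrite comp_idr. symmetry. exact Ea.
  - exists (idm K). split; apply comp_idl.
Qed.

Lemma mono_of_trivial_kernel {A B : C} (f : hom A B) :
  (forall W (w : hom W A), f ∘ w = zero_mor W B -> w = zero_mor W A) -> isMono f.
Proof.
  intros Hker.
  destruct (Hpb A A B f f) as (R & r1 & r2 & Hkp).
  destruct (proj2 Hkp A (idm A) (idm A) eq_refl) as (d & [D1 D2] & _).
  (* the diagonal d is a section of r1, whose kernel is 0; so d is invertible *)
  assert (Hk : isKernel (from_zero R) r1).
  { split.
    - apply isZeroMor_iff, zero_mor_from_zero.
    - intros W w Hw. apply isZeroMor_iff in Hw.
      assert (Hw2 : r2 ∘ w = zero_mor W A).
      { apply Hker. rewrite comp_assoc, <- (proj1 Hkp), <- comp_assoc, Hw. apply comp_zero. }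
      exists (to_zero W). split.
      + apply (pullback_jointlyMono Hkp); rewrite comp_assoc.
        * rewrite (zero_mor_from_zero (r1 ∘ from_zero R)), zero_comp. symmetry. exact Hw.
        * rewrite (zero_mor_from_zero (r2 ∘ from_zero R)), zero_comp. symmetry. exact Hw2.
      + intros u _. apply to_zero_unique. }
  destruct (kernel_section_mono_iso r1 d (from_zero R) d (from_zero A) (idm A) D1 Hk
              (section_mono _ _ D1) (from_zero_unique _) (comp_idr d))
    as (e & _ & He).
  assert (Er : r1 = r2).
  { rewrite <- (comp_idr r1), <- (comp_idr r2), <- He. assoc_l. rewrite D1, D2. reflexivity. }
  intros W u v E. destruct (proj2 Hkp W u v E) as (w & [W1 W2] & _).
  rewrite <- W1, <- W2, Er. reflexivity.
Qed.

Lemma jointlyMono_of_mono_on_kernel {P X A K : C} (f : hom P X) (k : hom K P) (phi : hom P A) :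
  isKernel k f -> isMono (phi ∘ k) -> jointlyMono phi f.
Proof.
  intros [_ Hk] Hm.
  destruct (product_exists X A) as (Q & q1 & q2 & Hq).
  destruct (Hq P f phi) as (g & [G1 G2] & _).
  assert (Hg : isMono g).
  { apply mono_of_trivial_kernel. intros W w Hw.
    assert (Ef : f ∘ w = zero_mor W X) by (rewrite <- G1, <- comp_assoc, Hw; apply comp_zero).
    assert (Ephi : phi ∘ w = zero_mor W A) by (rewrite <- G2, <- comp_assoc, Hw; apply comp_zero).
    destruct (Hk W w (proj2 (isZeroMor_iff _) Ef)) as (u & Hu & _).
    assert (Eu : u = zero_mor W K).
    { apply Hm. rewrite <- comp_assoc, Hu, Ephi, comp_zero. reflexivity. }
    rewrite <- Hu, Eu. apply comp_zero. }
  intros W a b E1 E2. apply Hg, (product_jointlyMono Hq); assoc_l.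
  - rewrite G1. exact E2.
  - rewrite G2. exact E1.
Qed.

Lemma factor_through_mono {X Y P A J : C} {p1 : hom P X} {p2 : hom P Y}
  {i1 : hom X P} {i2 : hom Y P} (phi : hom P A) (j : hom J A) (a : hom X J) (b : hom Y J) :
  isProduct p1 p2 -> isProductInjections p1 p2 i1 i2 -> isMono j ->
  phi ∘ i1 = j ∘ a -> phi ∘ i2 = j ∘ b -> exists h : hom P J, j ∘ h = phi.
Proof.
  intros Hp Hinj Hj Ea Eb.
  destruct (Hpb _ _ _ phi j) as (N & n & m & Hn).
  destruct (proj2 Hn X i1 a Ea) as (a' & [A1 _] & _).
  destruct (proj2 Hn Y i2 b Eb) as (b' & [B1 _] & _).
  destruct (kernel_section_mono_iso p2 i2 i1 n a' b' (proj2 (proj2 (proj2 Hinj)))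
              (kernel_product_injection Hp Hinj) (pullback_mono Hn Hj) A1 B1)
    as (n' & _ & Hn').
  exists (m ∘ n'). rewrite comp_assoc, <- (proj1 Hn), <- comp_assoc, Hn'. apply comp_idr.
Qed.

Lemma pairing_mono_of_disjoint_kernels {J KX KY QX QY D : C}
  {kX : hom KX J} {kY : hom KY J} {qX : hom J QX} {qY : hom J QY}
  {d1 : hom D QX} {d2 : hom D QY} {e : hom J D} :
  isKernel kX qX -> isKernel kY qY -> d1 ∘ e = qX -> d2 ∘ e = qY ->
  (forall W (a : hom W KX) (b : hom W KY), kX ∘ a = kY ∘ b -> a = zero_mor W KX) ->
  isMono e.
Proof.
  intros [_ HkX] [_ HkY] De1 De2 Hdisj. apply mono_of_trivial_kernel. intros W w Ew.
  assert (W1 : isZeroMor (qX ∘ w)).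
  { apply isZeroMor_iff. rewrite <- De1, <- comp_assoc, Ew. apply comp_zero. }
  assert (W2 : isZeroMor (qY ∘ w)).
  { apply isZeroMor_iff. rewrite <- De2, <- comp_assoc, Ew. apply comp_zero. }
  destruct (HkX W w W1) as (a & Ha & _). destruct (HkY W w W2) as (b & Hb & _).
  rewrite <- Ha, (Hdisj W a b (eq_trans Ha (eq_sym Hb))). apply comp_zero.
Qed.

Lemma huqCommute_of_normal_meet_zero {X Y A J : C} {mX : hom X A} {mY : hom Y A}
  {j : hom J A} {iX : hom X J} {iY : hom Y J} :
  isMono j -> j ∘ iX = mX -> j ∘ iY = mY ->
  meetIsZero mX mY -> isNormalSub iX -> isNormalSub iY -> huqCommute mX mY.
Proof.
  intros Hj HiX HiY Hmeet (QX & qX & HkX) (QY & qY & HkY).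
  destruct (product_exists X Y) as (P & p1 & p2 & Hp).
  destruct (product_injections_exist Hp) as (i1 & i2 & Hinj).
  pose proof Hinj as (E11 & E12 & E21 & E22).
  destruct (product_exists QX QY) as (D & d1 & d2 & HD).
  destruct (HD J qX qY) as (e & [De1 De2] & _).
  assert (He : isMono e).
  { apply (pairing_mono_of_disjoint_kernels HkX HkY De1 De2).
    intros W a b E. apply (meet_zero_cone a b Hmeet).
    rewrite <- HiX, <- HiY, <- !comp_assoc, E. reflexivity. }
  destruct (HD P (qX ∘ iY ∘ p2) (qY ∘ iX ∘ p1)) as (psi & [S1 S2] & _).
  pose proof (proj1 (isZeroMor_iff _) (proj1 HkX)) as KX.
  pose proof (proj1 (isZeroMor_iff _) (proj1 HkY)) as KY.
  assert (Ps1 : psi ∘ i1 = e ∘ iX).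
  { apply (product_jointlyMono HD); assoc_l.
    - rewrite S1, De1, KX. assoc_r. rewrite E12, !comp_zero. reflexivity.
    - rewrite S2, De2. assoc_r. rewrite E11, comp_idr. reflexivity. }
  assert (Ps2 : psi ∘ i2 = e ∘ iY).
  { apply (product_jointlyMono HD); assoc_l.
    - rewrite S1, De1. assoc_r. rewrite E22, comp_idr. reflexivity.
    - rewrite S2, De2, KY. assoc_r. rewrite E21, !comp_zero. reflexivity. }
  destruct (factor_through_mono psi e iX iY Hp Hinj He Ps1 Ps2) as (h & Hh).
  apply huqCommute_iff. exists P, p1, p2, i1, i2, (j ∘ h).
  split; [exact Hp|split; [exact Hinj|split]].
  - rewrite <- HiX, <- comp_assoc. f_equal. apply He. rewrite comp_assoc, Hh. exact Ps1.
  - rewrite <- HiY, <- comp_assoc. f_equal. apply He. rewrite comp_assoc, Hh. exact Ps2.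
Qed.

Lemma normal_in_join_of_mono_copair {X Y P A J : C} {p1 : hom P X} {p2 : hom P Y}
  {i1 : hom X P} {i2 : hom Y P} {mX : hom X A} {mY : hom Y A} {j : hom J A} {iX : hom X J}
  (phi : hom P A) :
  isProduct p1 p2 -> isProductInjections p1 p2 i1 i2 -> isMono phi ->
  phi ∘ i1 = mX -> phi ∘ i2 = mY -> isJoinSub mX mY j -> j ∘ iX = mX -> isNormalSub iX.
Proof.
  intros Hp Hinj Hphi F1 F2 (Hj & [a Ha] & [b Hb] & Hleast) HiX.
  destruct (factor_through_mono phi j a b Hp Hinj Hj (eq_trans F1 (eq_sym Ha))
              (eq_trans F2 (eq_sym Hb))) as (h & Hh).
  destruct (Hleast P phi Hphi (ex_intro _ i1 F1) (ex_intro _ i2 F2)) as (g & Hg).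
  assert (Ehg : h ∘ g = idm J).
  { apply Hj. rewrite comp_assoc, Hh, Hg, comp_idr. reflexivity. }
  assert (Egh : g ∘ h = idm P).
  { apply Hphi. rewrite comp_assoc, Hg, Hh, comp_idr. reflexivity. }
  assert (Ei : h ∘ i1 = iX).
  { apply Hj. rewrite comp_assoc, Hh, F1, HiX. reflexivity. }
  exists Y, (p2 ∘ g). rewrite <- Ei.
  exact (kernel_iso i1 p2 h g (kernel_product_injection Hp Hinj) Ehg Egh).
Qed.

Lemma mono_of_mono_on_injections {X Y P A : C} {p1 : hom P X} {p2 : hom P Y}
  {i1 : hom X P} {i2 : hom Y P} (phi : hom P A) :
  isProduct p1 p2 -> isProductInjections p1 p2 i1 i2 ->
  isMono (phi ∘ i1) -> isMono (phi ∘ i2) -> isMono phi.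
Proof.
  intros Hp Hinj Hm1 Hm2. apply (mono_of_jointlyMono_projections phi Hp).
  - apply (jointlyMono_of_mono_on_kernel p1 i2 phi); [|exact Hm2].
    exact (kernel_product_injection (product_swap Hp) (product_injections_swap Hinj)).
  - exact (jointlyMono_of_mono_on_kernel p2 i1 phi (kernel_product_injection Hp Hinj) Hm1).
Qed.

End Protomodular.
End Pointed.

Theorem mainTheorem19 (C : Category) (HC : semi_abelian C) (Harith : arithmetical C)
  (A X Y : C) (mX : hom X A) (mY : hom Y A) (HmX : isMono mX) (HmY : isMono mY)
  (J : C) (j : hom J A) (iX : hom X J) (iY : hom Y J)
  (Hjoin : isJoinSub mX mY j) (HiX : j ∘ iX = mX) (HiY : j ∘ iY = mY) :
  huqCommute mX mY <-> (meetIsZero mX mY /\ isNormalSub iX /\ isNormalSub iY).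
Proof.
  destruct HC as ((Z & HZ) & (((_ & Hpb) & _) & _) & Hpm & _).
  split.
  - intros Hhuq.
    destruct (proj1 (huqCommute_iff HZ mX mY) Hhuq)
      as (P & p1 & p2 & i1 & i2 & phi & Hp & Hinj & F1 & F2).
    assert (Hphi : isMono phi).
    { apply (mono_of_mono_on_injections HZ Hpb Harith Hpm phi Hp Hinj);
        [rewrite F1 | rewrite F2]; assumption. }
    split; [|split].
    + exact (meet_zero_of_mono_copair HZ phi Hinj Hphi F1 F2).
    + exact (normal_in_join_of_mono_copair HZ Hpb Hpm phi Hp Hinj Hphi F1 F2 Hjoin HiX).
    + exact (normal_in_join_of_mono_copair HZ Hpb Hpm phi (product_swap Hp)
               (product_injections_swap HZ Hinj) Hphi F2 F1 (join_swap Hjoin) HiY).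
  - intros (Hmeet & HnX & HnY).
    exact (huqCommute_of_normal_meet_zero HZ Hpb Hpm (proj1 Hjoin) HiX HiY Hmeet HnX HnY).
Qed.
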